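(* Let $\mathcal C\subseteq 2^{[n]}$ be a degree two code and let $i,j\in[n]$ with $j<i$ in $P(\mathcal C)$. Then $N(j)\subseteq I(i)\cup N(i)$.
   Context: A code is a set $\mathcal C\subseteq 2^{[n]}$, $[n]=\{1,\dots,n\}$. Standing conventions: $\emptyset\in\mathcal C$; every neuron lies in some codeword; no two distinct neurons lie in exactly the same codewords. A pseudo-monomial in $\mathbb F_2[x_1,\dots,x_n]$ is $\prod_{a\in\alpha}x_a\prod_{b\in\beta}(1-x_b)$ with $\alpha\cap\beta=\emptyset$, ordered by divisibility. $J_\mathcal C=\langle\rho_\gamma:\gamma\notin\mathcal C\rangle$ with $\rho_\gamma=\prod_{a\in\gamma}x_a\prod_{b\notin\gamma}(1-x_b)$; $\mathrm{CF}(J_\mathcal C)$ is the set of minimal pseudo-monomials in $J_\mathcal C$. $\mathcal C$ is degree two if every element of $\mathrm{CF}(J_\mathcal C)$ has degree two. $G(\mathcal C)$ is the graph on $[n]$ with edge $ab$ whenever $\mathrm{CF}(J_\mathcal C)$ has no pseudo-monomial whose two variables are $x_a,x_b$; $P(\mathcal C)$ is the partial order on $[n]$ with $a<b$ iff $x_a(1-x_b)\in\mathrm{CF}(J_\mathcal C)$. $N(a)$ is the set of neighbors of $a$ in $G(\mathcal C)$ and $I(a)=\{b: b<a \text{ in } P(\mathcal C)\}$. *)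

From HB Require Import structures.
From mathcomp Require Import all_boot all_order all_algebra.
From mathcomp Require Import mpoly.
Set Implicit Arguments. Unset Strict Implicit. Unset Printing Implicit Defensive.
Import GRing.Theory.
Local Open Scope ring_scope.

(* Neurons are 'I_n (i.e. [n] shifted to 0..n-1); codewords are {set 'I_n};
   a code is a {set {set 'I_n}}. Polynomials live in F_2[x_0..x_{n-1}]. *)
Notation poly2 n := {mpoly 'F_2[n]}.

Definition pmono (n : nat) (alpha beta : {set 'I_n}) : poly2 n :=
  (\prod_(a in alpha) 'X_a) * \prod_(b in beta) (1 - 'X_b).

Definition is_pm (n : nat) (alpha beta : {set 'I_n}) : bool :=
  [disjoint alpha & beta].

Definition rho (n : nat) (gamma : {set 'I_n}) : poly2 n := pmono gamma (~: gamma).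

Definition inJ (n : nat) (C : {set {set 'I_n}}) (f : poly2 n) : Prop :=
  exists h : {set 'I_n} -> poly2 n,
    f = \sum_(gamma in ~: C) h gamma * rho gamma.

Definition pdivides (n : nat) (f g : poly2 n) : Prop := exists h, g = h * f.

Definition inCF (n : nat) (C : {set {set 'I_n}}) (alpha beta : {set 'I_n}) : Prop :=
  [/\ is_pm alpha beta, inJ C (pmono alpha beta) &
      forall alpha' beta' : {set 'I_n}, is_pm alpha' beta' ->
        inJ C (pmono alpha' beta') ->
        pdivides (pmono alpha' beta') (pmono alpha beta) ->
        pmono alpha' beta' = pmono alpha beta].

Definition good_code (n : nat) (C : {set {set 'I_n}}) : Prop :=
  [/\ set0 \in C,
      forall a : 'I_n, exists2 c, c \in C & a \in c &
      forall a b : 'I_n, (forall c, c \in C -> (a \in c) = (b \in c)) -> a = b].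

Definition degree_two (n : nat) (C : {set {set 'I_n}}) : Prop :=
  forall alpha beta, inCF C alpha beta -> (#|alpha| + #|beta| = 2)%N.

Definition Gedge (n : nat) (C : {set {set 'I_n}}) (a b : 'I_n) : Prop :=
  a <> b /\ ~ (exists alpha beta, inCF C alpha beta /\ alpha :|: beta = [set a; b]).

Definition Plt (n : nat) (C : {set {set 'I_n}}) (a b : 'I_n) : Prop :=
  inCF C [set a] [set b].

Definition Nbhd (n : nat) (C : {set {set 'I_n}}) (a : 'I_n) : 'I_n -> Prop :=
  fun b => Gedge C a b.
Definition Ibelow (n : nat) (C : {set {set 'I_n}}) (a : 'I_n) : 'I_n -> Prop :=
  fun b => Plt C b a.

From HB Require Import structures.
From mathcomp Require Import all_boot all_order all_algebra.
From mathcomp Require Import mpoly ring.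
From Stdlib Require Import Classical.
Set Implicit Arguments. Unset Strict Implicit. Unset Printing Implicit Defensive.
Import GRing.Theory.
Local Open Scope ring_scope.

(* Evaluating at indicator vectors of sets makes everything combinatorial: the
   pseudo-monomial with positive variables a and negative variables b lies in
   J_C iff no codeword c has a <= c and b /\ c = 0, and a pseudo-monomial
   dividing it has its positive and negative variables among a and b.  As the
   empty set is a codeword and every neuron fires in some codeword, no
   pseudo-monomial of degree at most one lies in J_C, so every one of degree
   two in J_C is in CF(J_C).  Since j < i, every codeword containing j contains
   i.  If CF(J_C) has an element in x_i, x_k, it is x_k (1 - x_i), i.e. k < i,
   or else it is x_i x_k or x_i (1 - x_k) and replacing x_i by x_j yields an
   element of J_C, hence of CF(J_C), in x_j, x_k, contradicting that jk is an
   edge of G(C); (1 - x_i)(1 - x_k) is excluded by the empty codeword. *)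

Section PseudoMonomials.
Variable n : nat.
Implicit Types (a b c : {set 'I_n}) (C : {set {set 'I_n}}).

Definition pm_sat a b c : bool := (a \subset c) && [disjoint b & c].

Lemma disjoints0 a : [disjoint a & set0].
Proof. by rewrite disjoints_subset setC0 subsetT. Qed.

Definition indicator c : 'I_n -> 'F_2 := fun x => (x \in c)%:R.

Lemma meval_pmono a b c : (pmono a b).@[indicator c] = (pm_sat a b c)%:R.
Proof.
have prodX : \prod_(x in a) indicator c x = (a \subset c)%:R.
  have [ac|/subsetPn[x xa xNc]] := boolP (a \subset c).
    by apply: big1 => x xa; rewrite /indicator (subsetP ac x xa).
  by rewrite (bigD1 x) //= /indicator (negbTE xNc) mul0r.
have prod1BX : \prod_(x in b) (1 - indicator c x) = [disjoint b & c]%:R.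
  have [bc|] := boolP [disjoint b & c].
    by apply: big1 => x xb; rewrite /indicator (disjointFr bc xb) subr0.
  rewrite disjoints_subset => /subsetPn[x xb]; rewrite inE negbK => xc.
  by rewrite (bigD1 x) //= /indicator xc subrr mul0r.
rewrite /pmono mevalM !rmorph_prod /=.
under eq_bigr => x _ do rewrite mevalXU.
under [X in _ * X]eq_bigr => x _ do rewrite mevalB meval1 mevalXU.
by rewrite prodX prod1BX -natrM mulnb.
Qed.

Lemma pm_satU1 x a b c : pm_sat (x |: a) b c = (x \in c) && pm_sat a b c.
Proof. by rewrite /pm_sat subUset sub1set andbA. Qed.

Lemma pm_sat0 b : pm_sat set0 b set0.
Proof. by rewrite /pm_sat sub0set disjoints0. Qed.

Lemma pm_sat_rho g c : pm_sat g (~: g) c = (g == c).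
Proof. by rewrite /pm_sat disjoints_subset setCS eqEsubset. Qed.

Lemma pm_satS a a' b b' c :
  a' \subset a -> b' \subset b -> pm_sat a b c -> pm_sat a' b' c.
Proof.
move=> sa sb /andP[ac bc]; apply/andP; split; first exact: subset_trans ac.
exact: disjointWl bc.
Qed.

Lemma inJ_pmono_unsat C a b c : inJ C (pmono a b) -> c \in C -> ~~ pm_sat a b c.
Proof.
move=> [h defab] cC; apply/negP => sat_c.
have := congr1 (meval (indicator c)) defab.
rewrite meval_pmono sat_c raddf_sum /= big1 ?oner_eq0 // => g.
rewrite inE mevalM /rho meval_pmono pm_sat_rho.
by have [->|] := eqVneq g c; [rewrite cC | rewrite mulr0].
Qed.

Lemma inJD C f g : inJ C f -> inJ C g -> inJ C (f + g).
Proof.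
move=> [h1 ->] [h2 ->]; exists (fun x => h1 x + h2 x).
by rewrite -big_split /=; apply: eq_bigr => x _; rewrite mulrDl.
Qed.

Lemma pmono_split v a b :
  v \notin a -> v \notin b -> pmono a b = pmono (v |: a) b + pmono a (v |: b).
Proof. by move=> va vb; rewrite /pmono !big_setU1 //=; ring. Qed.

(* Splitting along the free variables ([pmono_split]) eventually writes
   [pmono a b] as the sum of the [rho c] over the sets [c] satisfying it, none
   of which is a codeword. *)
Lemma unsat_inJ_pmono C a b :
  [disjoint a & b] -> {in C, forall c, ~~ pm_sat a b c} -> inJ C (pmono a b).
Proof.
move Em : #|~: (a :|: b)| => m; elim: m a b Em => [|m IH] a b Em dab unsat.
  have {}Em : a :|: b = setT.
    by apply: setC_inj; rewrite setCT; apply/eqP; rewrite -cards_eq0 Em.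
  have defb : b = ~: a.
    apply/setP => x; rewrite inE; move/setP: Em => /(_ x); rewrite !inE.
    by have [xa|//] := boolP (x \in a); rewrite (disjointFr dab xa).
  have aNC : a \notin C by apply: contraL (unsat a) _; rewrite defb pm_sat_rho.
  exists (fun g => (g == a)%:R); rewrite (bigD1 a) ?inE //= eqxx mul1r.
  by rewrite big1 ?addr0 ?defb // => g /andP[_ /negbTE->]; rewrite mul0r.
have [v vfree] : exists v, v \in ~: (a :|: b) by apply/set0Pn; rewrite -card_gt0 Em.
move: (vfree); rewrite !inE negb_or => /andP[va vb].
have card_free : #|~: (v |: (a :|: b))| = m.
  by rewrite setCU setIC -setDE; move: Em; rewrite (cardsD1 v) vfree add1n => -[].
rewrite (pmono_split va vb); apply: inJD; apply: IH.
- by rewrite -setUA.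
- by rewrite disjoints_subset subUset sub1set inE vb -disjoints_subset.
- by move=> c /unsat; apply: contra; apply: pm_satS; rewrite ?subsetUr.
- by rewrite setUCA.
- rewrite disjoint_sym disjoints_subset subUset sub1set inE va.
  by rewrite -disjoints_subset disjoint_sym.
- by move=> c /unsat; apply: contra; apply: pm_satS; rewrite ?subsetUr.
Qed.

Lemma pdivides_pmono_sat a b a' b' c :
  pdivides (pmono a' b') (pmono a b) -> pm_sat a b c -> pm_sat a' b' c.
Proof.
move=> [h defab] sat_c; apply: contraT => unsat_c.
have := congr1 (meval (indicator c)) defab.
rewrite meval_pmono mevalM meval_pmono sat_c (negbTE unsat_c) mulr0.
by move/eqP; rewrite oner_eq0.
Qed.

Lemma pdivides_pmono_subset a b a' b' :
  is_pm a b -> pdivides (pmono a' b') (pmono a b) -> a' \subset a /\ b' \subset b.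
Proof.
move=> dab div; have sat c : pm_sat a b c -> pm_sat a' b' c := pdivides_pmono_sat div.
have /andP[-> _] : pm_sat a' b' a by apply: sat; rewrite /pm_sat subxx /= disjoint_sym.
have /andP[_] : pm_sat a' b' (~: b).
  apply: sat; rewrite /pm_sat -disjoints_subset [[disjoint a & b]]dab.
  by rewrite disjoints_subset setCK subxx.
by rewrite disjoints_subset setCK.
Qed.

Lemma inCF_deletions C a b :
  is_pm a b -> inJ C (pmono a b) ->
  (forall x, x \in a :|: b -> exists2 c, c \in C & pm_sat (a :\ x) (b :\ x) c) ->
  inCF C a b.
Proof.
move=> dab J del; split => // a' b' da'b' J' /(pdivides_pmono_subset dab)[sa sb].
have kept x : x \in a :|: b -> (x \in a') || (x \in b').
  move=> xab; apply: contraT; rewrite negb_or => /andP[xa' xb'].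
  have [c cC sat_c] := del x xab.
  have : pm_sat a' b' c by apply: pm_satS sat_c; rewrite subsetD1 ?sa ?sb ?xa' ?xb'.
  by rewrite (negbTE (inJ_pmono_unsat J' cC)).
have aa' : a \subset a'.
  apply/subsetP => x xa; have /orP[//|xb'] := kept x (subsetP (subsetUl a b) x xa).
  by have := subsetP sb x xb'; rewrite (disjointFr dab xa).
have bb' : b \subset b'.
  apply/subsetP => x xb; have /orP[xa'|//] := kept x (subsetP (subsetUr a b) x xb).
  by have := subsetP sa x xa'; rewrite (disjointFl dab xb).
by congr pmono; apply/eqP; rewrite eqEsubset ?sa ?sb.
Qed.

Lemma inJ_pmono_implied C i j a b :
  {in C, forall c, j \in c -> i \in c} -> [disjoint j |: a & b] ->
  inJ C (pmono (i |: a) b) -> inJ C (pmono (j |: a) b).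
Proof.
move=> ji djab J; apply: unsat_inJ_pmono => // c cC.
rewrite pm_satU1; apply/andP => -[jc sat_c].
by have := inJ_pmono_unsat J cC; rewrite pm_satU1 (ji c cC jc) sat_c.
Qed.

Lemma pair_pm_cases x y a b :
  x != y -> [disjoint a & b] -> a :|: b = [set x; y] ->
  [\/ a = [set x; y] /\ b = set0, a = [set x] /\ b = [set y],
      a = [set y] /\ b = [set x] | a = set0 /\ b = [set x; y]].
Proof.
move=> xy dab ab.
have defb : b = [set x; y] :\: a.
  by rewrite -ab setDUl setDv set0U; apply/esym/setDidPl; rewrite disjoint_sym.
have mem_a z : (z \in a) = ((z == x) && (x \in a)) || ((z == y) && (y \in a)).
  apply/idP/idP => [za|/orP[]/andP[/eqP-> //]].
  have := subsetP (subsetUl a b) z za; rewrite ab !inE.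
  by case/orP => /eqP zE; rewrite -zE za eqxx ?orbT.
rewrite defb; case xa: (x \in a); case ya: (y \in a);
  [apply: Or41 | apply: Or42 | apply: Or43 | apply: Or44]; split; apply/setP => z;
  rewrite !inE (mem_a z) xa ya; have [->|zx] := eqVneq z x; rewrite ?(negbTE xy) ?eqxx //=;
  by case: (z == y).
Qed.

Lemma good_code_sat_le1 C a b :
  good_code C -> [disjoint a & b] -> (#|a :|: b| <= 1)%N ->
  exists2 c, c \in C & pm_sat a b c.
Proof.
move=> [C0 covered _] dab /card_le1_eqP eq_ab.
have [->|[y ya]] := set_0Vmem a.
  by exists set0; rewrite ?pm_sat0.
have b0 : b = set0.
  apply/setP => x; rewrite inE; apply/negP => xb.
  have xy : x = y by apply: eq_ab; rewrite inE ?xb ?ya ?orbT.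
  by rewrite xy (disjointFr dab ya) in xb.
have [c cC yc] := covered y.
exists c; rewrite // /pm_sat b0 disjoints_subset sub0set andbT.
apply/subsetP => x xa; suff -> : x = y by [].
by apply: eq_ab; rewrite inE ?xa ?ya.
Qed.

Lemma inCF_degree_two C a b :
  good_code C -> is_pm a b -> #|a :|: b| = 2 -> inJ C (pmono a b) -> inCF C a b.
Proof.
move=> code dab ab2 J; apply: inCF_deletions => // x xab.
apply: good_code_sat_le1 => //; first exact: disjointW (subD1set a x) (subD1set b x) dab.
by rewrite -setDUl; have := cardsD1 x (a :|: b); rewrite xab ab2 add1n => -[<-].
Qed.

Lemma Plt_codeword C j i c : Plt C j i -> c \in C -> j \in c -> i \in c.
Proof.
move=> [_ J _] cC jc.
by have := inJ_pmono_unsat J cC; rewrite /pm_sat sub1set jc disjoints1 /= negbK.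
Qed.

End PseudoMonomials.

Theorem lemma2p3 (n : nat) (C : {set {set 'I_n}}) (i j : 'I_n) :
  good_code C -> degree_two C -> Plt C j i ->
  forall k : 'I_n, Nbhd C j k -> Ibelow C i k \/ Nbhd C i k.
Proof.
move=> code _ Pji k [jk noCF]; have [C0 _ _] := code.
have j_to_i : {in C, forall c : {set 'I_n}, j \in c -> i \in c}.
  by move=> c; apply: Plt_codeword.
have jk_notin_J a b : is_pm a b -> a :|: b = [set j; k] -> ~ inJ C (pmono a b).
  move=> dab ab J; apply: noCF; exists a, b; split => //.
  by apply: inCF_degree_two => //; rewrite ab cards2 (introF eqP jk).
have ik : i != k by apply/eqP => ik; apply: noCF; rewrite -ik; exists [set j], [set i].
have [[a [b [CFab ab]]]|] := classic (exists a b, inCF C a b /\ a :|: b = [set i; k]);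
  last by right; split; [apply/eqP|].
have [dab J _] := CFab.
case: (pair_pm_cases ik dab ab) => -[Ea Eb]; subst a b.
- exfalso; apply: (jk_notin_J [set j; k] set0); rewrite ?setU0 //.
    exact: disjoints0.
  by apply: (inJ_pmono_implied j_to_i _ J); apply: disjoints0.
- exfalso; apply: (jk_notin_J [set j] [set k]) => //.
    by rewrite /is_pm disjoints1 inE; apply/eqP.
  have := inJ_pmono_implied (a := set0) j_to_i; rewrite !setU0; apply => //.
  by rewrite disjoints1 inE; apply/eqP.
- by left.
- by have := inJ_pmono_unsat J C0; rewrite pm_sat0.
Qed.
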